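(* Let $D$ be a finite set of games between models $m_0,\dots,m_{k-1}$ such that there exists one model that has played every other model at least once in $D$. For a rating vector $\mathbf{R}=(R^{m_0},\dots,R^{m_{k-1}})\in\mathbb{R}^k$ define the logistic loss $$\mathcal{L}(D,\mathbf{R})=\sum_{g\in D}\Big[-g_r\log \operatorname{sig}\Big(\tfrac{R^{g_{m_a}}-R^{g_{m_b}}}{400}\Big)-(1-g_r)\log\Big(1-\operatorname{sig}\Big(\tfrac{R^{g_{m_a}}-R^{g_{m_b}}}{400}\Big)\Big)\Big],$$ with $\operatorname{sig}(x)=1/(1+e^{-x})$. If $\mathbf{R}_1$ and $\mathbf{R}_2$ both minimize $\mathbf{R}\mapsto\mathcal{L}(D,\mathbf{R})$ over $\mathbb{R}^k$, then $\mathbf{R}_1-\mathbf{R}_2$ is a constant vector (all its entries are equal).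
   Context: Each game $g\in D$ consists of two distinct models $g_{m_a},g_{m_b}$ among $m_0,\dots,m_{k-1}$ and a result $g_r\in\{0,\tfrac12,1\}$ ($1$ if $g_{m_a}$ wins, $0$ if it loses, $\tfrac12$ for a draw). *)

From mathcomp Require Import all_boot all_order all_algebra.
From mathcomp Require Import all_classical all_reals all_analysis.
Set Implicit Arguments. Unset Strict Implicit. Unset Printing Implicit Defensive.
Import Order.TTheory GRing.Theory Num.Theory.
Local Open Scope ring_scope.

(* A game between models 'I_k: model a, model b, result (score of a). *)
Record game (R : realType) (k : nat) := Game {
  g_ma : 'I_k;
  g_mb : 'I_k;
  g_r  : R }.

Definition sig (R : realType) (x : R) : R := 1 / (1 + expR (- x)).

Definition wf_game (R : realType) (k : nat) (g : game R k) : Prop :=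
  g_ma g != g_mb g /\ (g_r g = 0 \/ g_r g = 1 / 2 \/ g_r g = 1).

Definition wf_games (R : realType) (k : nat) (D : seq (game R k)) : Prop :=
  foldr (fun g P => wf_game g /\ P) True D.

Definition loss (R : realType) (k : nat) (D : seq (game R k)) (Rt : 'I_k -> R) : R :=
  \sum_(g <- D)
     (let p := sig ((Rt (g_ma g) - Rt (g_mb g)) / 400) in
      - g_r g * ln p - (1 - g_r g) * ln (1 - p)).

Definition has_hub (R : realType) (k : nat) (D : seq (game R k)) : Prop :=
  exists m : 'I_k, forall m' : 'I_k, m' != m ->
    has (fun g => ((g_ma g == m) && (g_mb g == m'))
                || ((g_ma g == m') && (g_mb g == m))) D.

Definition is_minimizer (R : realType) (k : nat) (D : seq (game R k)) (Rt : 'I_k -> R) : Prop :=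
  forall Rt' : 'I_k -> R, loss D Rt <= loss D Rt'.

From mathcomp Require Import all_boot all_order all_algebra.
From mathcomp Require Import all_classical all_reals all_analysis.
From mathcomp Require Import ring lra.

Set Implicit Arguments.
Unset Strict Implicit.
Unset Printing Implicit Defensive.
Import Order.TTheory GRing.Theory Num.Theory.
Local Open Scope ring_scope.

(* Each game contributes [r * softplus (-x) + (1 - r) * softplus x] to the
   loss, where [x] is the scaled rating difference and [softplus] is strictly
   midpoint convex.  Hence, for two minimizers [R1] and [R2], the loss at the
   midpoint [(R1 + R2) / 2] is at most the mean of the two minimal losses, with
   equality only if every game sees the same rating difference under [R1] and
   [R2].  Every model has played the hub model, so its offset [R1 - R2] equals
   that of the hub. *)

Section SeqSums.
Variables (R : numDomainType) (T : Type).
Implicit Types (s : seq T) (F : T -> R).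

Lemma sumr_seq_ge0 s F : all (fun x => 0 <= F x) s -> 0 <= \sum_(x <- s) F x.
Proof.
elim: s => [|x s IH]; rewrite ?big_nil ?big_cons //= => /andP[Fx_ge0 Fs_ge0].
exact: addr_ge0 Fx_ge0 (IH Fs_ge0).
Qed.

Lemma psumr_seq_eq0 s F :
  all (fun x => 0 <= F x) s -> \sum_(x <- s) F x = 0 -> all (fun x => F x == 0) s.
Proof.
elim: s => [|x s IH] //=; rewrite big_cons => /andP[Fx_ge0 Fs_ge0] /eqP.
by rewrite paddr_eq0 ?sumr_seq_ge0 // => /andP[-> /eqP /(IH Fs_ge0)].
Qed.

End SeqSums.

Lemma has_all_exists (T : Type) (a b : pred T) (s : seq T) :
  has a s -> all b s -> exists x, a x && b x.
Proof.
elim: s => [|x s IH] //= /orP[ax | has_a] /andP[bx all_b]; last exact: IH.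
by exists x; rewrite ax bx.
Qed.

Section Softplus.
Variable R : realType.
Implicit Types (f : R -> R) (r x y : R).

Definition midpoint_gap f x y := f x + f y - 2 * f ((x + y) / 2).

Definition softplus x := ln (1 + expR x).

(* From [(1 + u^2) (1 + v^2) = (1 + u v)^2 + (u - v)^2] with [u = e^(x/2)], [v = e^(y/2)]. *)
Lemma softplus_midpoint_gapE x y :
  midpoint_gap softplus x y =
  ln (1 + ((expR (x / 2) - expR (y / 2)) / (1 + expR ((x + y) / 2))) ^+ 2).
Proof.
rewrite /midpoint_gap /softplus.
have expR_half (z : R) : expR z = expR (z / 2) ^+ 2.
  by rewrite -expRM_natl; congr expR; field.
have -> : expR ((x + y) / 2) = expR (x / 2) * expR (y / 2).
  by rewrite -expRD; congr expR; field.
rewrite [expR x]expR_half [expR y]expR_half.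
set u := expR (x / 2); set v := expR (y / 2).
have u_gt0 : 0 < u by exact: expR_gt0.
have v_gt0 : 0 < v by exact: expR_gt0.
have uv_gt0 : 0 < 1 + u * v by rewrite addr_gt0 ?mulr_gt0.
have -> : 1 + ((u - v) / (1 + u * v)) ^+ 2 = (1 + u ^+ 2) * (1 + v ^+ 2) / (1 + u * v) ^+ 2.
  by field; rewrite gt_eqF.
have sq1_gt0 (z : R) : 0 < 1 + z ^+ 2 by rewrite ltr_pwDl ?sqr_ge0.
rewrite ln_div ?posrE ?mulr_gt0 ?exprn_gt0 // lnM ?posrE // lnXn //.
by rewrite mulr_natl.
Qed.

Lemma softplus_midpoint_gap_ge0 x y : 0 <= midpoint_gap softplus x y.
Proof. by rewrite softplus_midpoint_gapE ln_ge0 // lerDl sqr_ge0. Qed.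

Lemma softplus_midpoint_gap_eq0 x y : midpoint_gap softplus x y = 0 -> x = y.
Proof.
rewrite softplus_midpoint_gapE => /eqP; rewrite ln_eq0; last first.
  by rewrite ltr_pwDl ?sqr_ge0.
rewrite -subr_eq0 [1 + _]addrC addrK sqrf_eq0 mulf_eq0 invr_eq0.
rewrite [_ + expR _ == 0]gt_eqF ?addr_gt0 ?expR_gt0 // orbF subr_eq0.
by move=> /eqP /expR_inj; lra.
Qed.

Definition game_loss r x := - r * ln (sig x) - (1 - r) * ln (1 - sig x).

Lemma game_lossE r x : game_loss r x = r * softplus (- x) + (1 - r) * softplus x.
Proof.
have sigE : sig x = (1 + expR (- x))^-1 by rewrite /sig div1r.
have sigCE : 1 - sig x = (1 + expR x)^-1.
  rewrite sigE expRN; field.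
  by rewrite !gt_eqF ?addr_gt0 ?invr_gt0 ?expR_gt0.
by rewrite /game_loss sigCE sigE !lnV ?posrE ?addr_gt0 ?expR_gt0 // /softplus; ring.
Qed.

Lemma game_loss_midpoint_gapE r x y :
  midpoint_gap (game_loss r) x y =
  r * midpoint_gap softplus (- x) (- y) + (1 - r) * midpoint_gap softplus x y.
Proof.
rewrite /midpoint_gap !game_lossE.
have -> : - ((x + y) / 2) = (- x + - y) / 2 by field.
ring.
Qed.

Lemma game_loss_midpoint_gap_ge0 r x y :
  0 <= r <= 1 -> 0 <= midpoint_gap (game_loss r) x y.
Proof.
move=> /andP[r_ge0 r_le1]; rewrite game_loss_midpoint_gapE.
by rewrite addr_ge0 ?mulr_ge0 ?softplus_midpoint_gap_ge0 ?subr_ge0.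
Qed.

(* At least one of the weights [r] and [1 - r] is nonzero. *)
Lemma game_loss_midpoint_gap_eq0 r x y :
  0 <= r <= 1 -> midpoint_gap (game_loss r) x y = 0 -> x = y.
Proof.
move=> /andP[r_ge0 r_le1]; rewrite game_loss_midpoint_gapE => /eqP.
rewrite paddr_eq0 ?mulr_ge0 ?softplus_midpoint_gap_ge0 ?subr_ge0 //.
rewrite !mulf_eq0 => /andP[/orP[/eqP r0 | /eqP gap_neg0] /orP[/eqP r1 | /eqP gap0]].
- lra.
- exact: softplus_midpoint_gap_eq0.
- by move/softplus_midpoint_gap_eq0/oppr_inj: gap_neg0.
- exact: softplus_midpoint_gap_eq0.
Qed.

End Softplus.

Section Ratings.
Variables (R : realType) (k : nat).
Implicit Types (D : seq (game R k)) (Rt : 'I_k -> R) (g : game R k).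

Definition rating_diff Rt g := (Rt (g_ma g) - Rt (g_mb g)) / 400.

Definition midpoint_ratings (R1 R2 : 'I_k -> R) i := (R1 i + R2 i) / 2.

Lemma lossE D Rt : loss D Rt = \sum_(g <- D) game_loss (g_r g) (rating_diff Rt g).
Proof. by []. Qed.

Lemma loss_midpoint_gapE D (R1 R2 : 'I_k -> R) :
  loss D R1 + loss D R2 - 2 * loss D (midpoint_ratings R1 R2) =
  \sum_(g <- D) midpoint_gap (game_loss (g_r g)) (rating_diff R1 g) (rating_diff R2 g).
Proof.
rewrite !lossE mulr_sumr -big_split -sumrB; apply: eq_bigr => g _.
have -> : rating_diff (midpoint_ratings R1 R2) g =
          (rating_diff R1 g + rating_diff R2 g) / 2.
  by rewrite /rating_diff /midpoint_ratings; field.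
by [].
Qed.

Lemma wf_games_result01 D : wf_games D -> all (fun g => 0 <= g_r g <= 1) D.
Proof.
elim: D => [|g D IH] //= [[_ result] /IH ->]; rewrite andbT.
by case: result => [-> | [-> | ->]]; apply/andP; split; lra.
Qed.

Lemma minimizers_same_rating_diff D (R1 R2 : 'I_k -> R) :
  wf_games D -> is_minimizer D R1 -> is_minimizer D R2 ->
  all (fun g => rating_diff R1 g == rating_diff R2 g) D.
Proof.
move=> /wf_games_result01 results01 R1_min R2_min.
pose gap g := midpoint_gap (game_loss (g_r g)) (rating_diff R1 g) (rating_diff R2 g).
have gaps_ge0 : all (fun g => 0 <= gap g) D.
  by apply: sub_all results01 => g; exact: game_loss_midpoint_gap_ge0.
have gap_sum_eq0 : \sum_(g <- D) gap g = 0.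
  apply/eqP; rewrite eq_le sumr_seq_ge0 // andbT -loss_midpoint_gapE.
  by have := R1_min (midpoint_ratings R1 R2); have := R2_min (midpoint_ratings R1 R2); lra.
have : all (predI (fun g => 0 <= g_r g <= 1) (fun g => gap g == 0)) D.
  by rewrite all_predI results01 psumr_seq_eq0.
by apply: sub_all => g /andP[result01 /eqP /(game_loss_midpoint_gap_eq0 result01) ->].
Qed.

End Ratings.

Theorem mainTheorem2 (R : realType) (k : nat) (D : seq (game R k))
  (hwf : wf_games D)
  (hhub : has_hub D)
  (R1 R2 : 'I_k -> R)
  (h1 : is_minimizer D R1) (h2 : is_minimizer D R2) :
  forall i j : 'I_k, R1 i - R2 i = R1 j - R2 j.
Proof.
have same_diff := minimizers_same_rating_diff hwf h1 h2.
have [hub hub_played] := hhub.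
suff offset_hub i : R1 i - R2 i = R1 hub - R2 hub by move=> i j; rewrite !offset_hub.
have [-> // | i_neq_hub] := eqVneq i hub.
have [g /andP[hub_vs_i /eqP]] := has_all_exists (hub_played i i_neq_hub) same_diff.
rewrite /rating_diff.
by case/orP: hub_vs_i => /andP[/eqP -> /eqP ->]; lra.
Qed.
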